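(* Let $R=k[x_1,\dots,x_n]$ be a standard graded polynomial ring over a field $k$, $I\subseteq R$ a homogeneous ideal, and $(F_\bullet,d_\bullet)$ a homogeneous free resolution of $R/I$ with $F_0=R$. Write $F_1=F_1'\oplus Re_0$ with $e_0$ generating a free direct summand, and $d_2=d_2'+d_0$ with $d_2':F_2\to F_1'$, $d_0:F_2\to Re_0$. Let $\mathfrak a$ be a homogeneous ideal with $d_0(F_2)\subseteq\mathfrak a e_0$, and let $(G_\bullet,m_\bullet)$ be a homogeneous free resolution of $R/\mathfrak a$ with $G_0=R$. Let $K'=d_1(F_1')$, $K_0=(d_1(e_0))$ and $J=K'+\mathfrak a K_0$. Let $d_0':F_2\to R$ be $d_0$ followed by $e_0\mapsto 1$, and let $q_1:F_2\to G_1$ and $q_k:F_{k+1}\to G_k$ ($k\ge2$) be homomorphisms with $m_1q_1=d_0'$ and $m_kq_k=q_{k-1}d_{k+1}$ for $k\ge 2$. Consider the complex $T_\bullet$: $\cdots\to F_3\xrightarrow{d_3}F_2\xrightarrow{d_2'}F_1'$ (with $F_1'$ in homological degree $0$ and $F_{i}$ in degree $i-1$), and the complex $B_\bullet$: $\cdots\to G_2\xrightarrow{m_2}G_1\xrightarrow{\beta}R$, where $\beta(g)=-m_1(g)\cdot d_1(e_0)$ (with $R$ in degree $0$). Then the maps $d_1|_{F_1'}:F_1'\to R$ and $q_{i-1}:F_i\to G_{i-1}$ ($i\ge2$) form a morphism of complexes $T_\bullet\to B_\bullet$, and the mapping cone of this morphism is a free resolution of $R/J$.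
   Context: The decomposition $d_2=d_2'+d_0$ is obtained by composing $d_2$ with the projections of $F_1=F_1'\oplus Re_0$ onto its summands. The mapping cone has $R$ in homological degree $0$, $F_1'\oplus G_1$ in degree $1$, and $F_i\oplus G_i$ in degree $i\ge 2$. This mapping cone is called the trimming complex. *)

(* polynomial ring = multinomials' {mpoly k[n]},
   finite free modules = row vectors 'rV_r, module maps = matrices acting
   on the right (v |-> v *m M). *)
From mathcomp Require Import all_boot all_order all_algebra.
From mathcomp Require Import mpoly.
Set Implicit Arguments. Unset Strict Implicit. Unset Printing Implicit Defensive.
Import GRing.Theory.
Local Open Scope ring_scope.

Section Defs.
Variables (k : fieldType) (n : nat).
Local Notation R := {mpoly k[n]}.

Definition is_ideal (I : R -> Prop) : Prop :=
  [/\ I 0, (forall p q, I p -> I q -> I (p + q)) & (forall r p, I p -> I (r * p))].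

Definition is_homog_ideal (I : R -> Prop) : Prop :=
  is_ideal I /\ forall p (e : nat), I p -> I (pihomog mdeg e p).

Definition ideal_add (I J : R -> Prop) : R -> Prop :=
  fun p => exists x y, [/\ I x, J y & p = x + y].
Definition ideal_mul (I J : R -> Prop) : R -> Prop :=
  fun p => exists (l : nat) (f g : 'I_l -> R),
    (forall i, I (f i) /\ J (g i)) /\ p = \sum_(i < l) f i * g i.
Definition principal_ideal (f : R) : R -> Prop := fun p => exists r, p = r * f.
Definition image_ideal (a : nat) (M : 'M[R]_(a, 1)) : R -> Prop :=
  fun p => exists u : 'rV[R]_a, (u *m M) 0 0 = p.

(* homogeneous (degree 0) map between graded free modules with generator
   degrees src (source) and tgt (target): entry (i,j) is homogeneous of
   degree src i - tgt j *)
Definition homog_mx (r s : nat) (src : 'I_r -> int) (tgt : 'I_s -> int)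
  (M : 'M[R]_(r, s)) : Prop :=
  forall i j, M i j != 0 ->
    exists e : nat, src i = (tgt j + e%:Z)%R /\ M i j \is ishomog1 e mdeg.

Definition exact_at (p q r : nat) (A : 'M[R]_(p, q)) (B : 'M[R]_(q, r)) : Prop :=
  A *m B = 0 /\ forall v : 'rV[R]_q, v *m B = 0 -> exists w : 'rV[R]_p, w *m A = v.

(* A free resolution  ... -> F_3 --d_3--> F_2 --d_2--> F_1 --d_1--> F_0 = R
   of R/I, with rank F_1 = r1, rank F_(i+2) = r i, and
   d1 = d_1, d2 = d_2, d i = d_(i+3). *)
Definition free_resolution (I : R -> Prop) (r1 : nat) (d1 : 'M[R]_(r1, 1))
  (r : nat -> nat) (d2 : 'M[R]_(r 0%N, r1)) (d : forall i, 'M[R]_(r i.+1, r i)) : Prop :=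
  [/\ (forall p, I p <-> image_ideal d1 p),
      exact_at d2 d1, exact_at (d 0%N) d2 & forall i, exact_at (d i.+1) (d i)].

Definition homog_free_resolution (I : R -> Prop) (r1 : nat) (d1 : 'M[R]_(r1, 1))
  (r : nat -> nat) (d2 : 'M[R]_(r 0%N, r1)) (d : forall i, 'M[R]_(r i.+1, r i)) : Prop :=
  free_resolution I d1 d2 d /\
  exists (s1 : 'I_r1 -> int) (s : forall i, 'I_(r i) -> int),
    [/\ homog_mx s1 (fun _ => 0%R) d1, homog_mx (s 0%N) s1 d2
      & forall i, homog_mx (s i.+1) (s i) (d i)].

End Defs.

From mathcomp Require Import all_boot all_order all_algebra.
From mathcomp Require Import mpoly.
Import GRing.Theory.
Local Open Scope ring_scope.

(* Free modules are row vectors over R = k[x_1..x_n] and maps are matrices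
   acting on the right, so the cone of a chain map Q : T -> B has
   differentials  block_mx (-D) Q 0 M,  where D and M are the
   differentials of T and B.

   1. General facts on mapping cones: the cone of a chain map is a complex,
      and it is exact at a position as soon as B is exact there and every
      cone cycle has its T-component in the image of D (this holds e.g.
      when T is exact there).
   2. The ideal J = K' + A K_0 is exactly the image of the first cone
      differential col_mx d_1' beta, because A K_0 consists of the
      multiples a * d_1(e_0) with a in A = image of m_1.
   3. Exactness of the cone at F_1' (+) G_1 and at F_2 (+) G_2 comes from
      the exactness of F at F_1 and F_2 together with that of G, using
      d_0' = q_1 m_1; in higher degrees it is the general cone lemma. *)

Section MappingCone.
Context {k : fieldType} {n : nat}.
Local Notation R := {mpoly k[n]}.

Lemma cone_complex fa fb fc ga gb gc (Da : 'M[R]_(fa, fb)) (Db : 'M[R]_(fb, fc))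
    (Qa : 'M[R]_(fa, gb)) (Qb : 'M[R]_(fb, gc))
    (Ma : 'M[R]_(ga, gb)) (Mb : 'M[R]_(gb, gc)) :
  Da *m Db = 0 -> Qa *m Mb = Da *m Qb -> Ma *m Mb = 0 ->
  block_mx (- Da) Qa 0 Ma *m block_mx (- Db) Qb 0 Mb = 0.
Proof.
move=> HD HQ HM.
rewrite mulmx_block !mulmxN !mulNmx HD HQ HM !mul0mx !mulmx0 opprK.
by rewrite !addr0 addNr oppr0 block_mx0.
Qed.

Lemma cone_exact fa fb fc ga gb gc (Da : 'M[R]_(fa, fb)) (Db : 'M[R]_(fb, fc))
    (Qa : 'M[R]_(fa, gb)) (Qb : 'M[R]_(fb, gc))
    (Ma : 'M[R]_(ga, gb)) (Mb : 'M[R]_(gb, gc)) :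
  Da *m Db = 0 -> Qa *m Mb = Da *m Qb -> exact_at Ma Mb ->
  (forall (x : 'rV[R]_fb) (y : 'rV[R]_gb),
     x *m Db = 0 -> x *m Qb + y *m Mb = 0 -> exists w, w *m Da = x) ->
  exact_at (block_mx (- Da) Qa 0 Ma) (block_mx (- Db) Qb 0 Mb).
Proof.
move=> HD HQ [HM HMexact] Tcycle; split; first exact: cone_complex.
move=> v; rewrite -(hsubmxK v); set x := lsubmx v; set y := rsubmx v.
rewrite mul_row_block mulmx0 addr0 -row_mx0 => /eq_row_mx [Hx Hxy].
have Hx0 : x *m Db = 0 by rewrite -[x *m Db]opprK -mulmxN Hx oppr0.
have [w Hw] := Tcycle x y Hx0 Hxy.
have [z Hz] : exists z, z *m Ma = y + w *m Qa.
  by apply: HMexact; rewrite mulmxDl -mulmxA HQ mulmxA Hw addrC.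
exists (row_mx (- w) z).
rewrite mul_row_block mulmx0 addr0 mulNmx mulmxN opprK Hw Hz.
by rewrite addrCA mulNmx addNr addr0.
Qed.

Lemma cone_exact_of_exact fa fb fc ga gb gc
    (Da : 'M[R]_(fa, fb)) (Db : 'M[R]_(fb, fc))
    (Qa : 'M[R]_(fa, gb)) (Qb : 'M[R]_(fb, gc))
    (Ma : 'M[R]_(ga, gb)) (Mb : 'M[R]_(gb, gc)) :
  exact_at Da Db -> Qa *m Mb = Da *m Qb -> exact_at Ma Mb ->
  exact_at (block_mx (- Da) Qa 0 Ma) (block_mx (- Db) Qb 0 Mb).
Proof.
move=> [HD HDexact] HQ HM; apply: cone_exact => // x y Hx _.
exact: HDexact.
Qed.

End MappingCone.

Section Trimming.
Context {k : fieldType} {n : nat}.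
Local Notation R := {mpoly k[n]}.

Lemma ideal_mul_principalE (A : R -> Prop) (f0 p : R) : is_ideal A ->
  ideal_mul A (principal_ideal f0) p <-> exists2 al, A al & p = al * f0.
Proof.
case=> A0 AD AM; split.
  case=> l [f [g [Hfg ->]]]; elim: l f g Hfg => [|l IH] f g Hfg.
    by exists 0; rewrite ?big_ord0 ?mul0r.
  rewrite big_ord_recr /=.
  have [al Hal ->] := IH (fun i => f (widen_ord (leqnSn l) i))
                         (fun i => g (widen_ord (leqnSn l) i)) (fun i => Hfg _).
  have [Hf [r Hr]] := Hfg ord_max.
  exists (al + r * f ord_max); first by apply: AD => //; exact: AM.
  by rewrite Hr mulrDl mulrCA mulrA.
case=> al Hal ->; exists 1%N, (fun _ => al), (fun _ => f0).
by rewrite big_ord1; split=> // _; split=> //; exists 1; rewrite mul1r.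
Qed.

Context {a b r2 : nat} {d1' : 'M[R]_(a, 1)} {f0 : R}
  {d2' : 'M[R]_(r2, a)} {d0 : 'M[R]_(r2, 1)}
  {m1 : 'M[R]_(b, 1)} {q1 : 'M[R]_(r2, b)}.
Hypothesis Hq1 : q1 *m m1 = d0.

(* beta : G_1 -> R, g |-> - m_1(g) * d_1(e_0). *)
Local Notation beta := (- (f0 *: m1)).

Lemma mulmx_beta p (g : 'M[R]_(p, b)) : g *m beta = - (f0 *: (g *m m1)).
Proof. by rewrite mulmxN -scalemxAr. Qed.

(* d_1 d_2 = 0 on F_2 splits as d_2' d_1' = -d_0' d_1(e_0) = q_1 beta:
   the first square of the chain map T -> B commutes. *)
Lemma trim_first_square :
  row_mx d2' d0 *m col_mx d1' f0%:M = 0 -> d2' *m d1' = q1 *m beta.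
Proof.
rewrite mul_row_col => H21.
rewrite mulmx_beta Hq1 -mul_mx_scalar.
by apply/eqP; rewrite -addr_eq0 H21.
Qed.

Lemma trim_image_ideal (A : R -> Prop) : is_ideal A ->
  (forall p, A p <-> image_ideal m1 p) ->
  forall p, ideal_add (image_ideal d1') (ideal_mul A (principal_ideal f0)) p
            <-> image_ideal (col_mx d1' beta) p.
Proof.
move=> HAideal HAm1 p; split.
  case=> x [y [[u Hu] /(ideal_mul_principalE _ _ _ HAideal) [al Hal ->] ->]].
  have [v Hv] := (HAm1 al).1 Hal.
  exists (row_mx u (- v)).
  by rewrite mul_row_col mxE Hu mulNmx mulmx_beta opprK mxE Hv mulrC.
case=> v <-; rewrite -(hsubmxK v) mul_row_col mxE.
exists ((lsubmx v *m d1') 0 0), ((rsubmx v *m beta) 0 0).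
split=> //; first by exists (lsubmx v).
apply/(ideal_mul_principalE _ _ _ HAideal).
exists (- (rsubmx v *m m1) 0 0); last by rewrite mulmx_beta !mxE mulNr mulrC.
case: HAideal => _ _ AM; rewrite -mulN1r; apply: AM.
by apply/HAm1; exists (rsubmx v).
Qed.

Lemma trim_exact_first {c} {m2 : 'M[R]_(c, b)} :
  exact_at (row_mx d2' d0) (col_mx d1' f0%:M) -> exact_at m2 m1 ->
  exact_at (block_mx (- d2') q1 0 m2) (col_mx d1' beta).
Proof.
move=> [H21 HFexact] [H12 HGexact]; split.
  rewrite mul_block_col -trim_first_square // mulNmx addNr mul0mx add0r.
  by rewrite mulmxN -scalemxAr H12 scaler0 oppr0 col_mx0.
move=> v; rewrite -(hsubmxK v) mul_row_col mulmx_beta.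
set u := lsubmx v; set g := rsubmx v => /subr0_eq Hu.
have [x Hx] : exists x, x *m row_mx d2' d0 = row_mx u (- (g *m m1)).
  by apply: HFexact; rewrite mul_row_col mulNmx mul_mx_scalar Hu subrr.
move: Hx; rewrite mul_mx_row => /eq_row_mx [Hx1 Hx2].
have [y Hy] : exists y, y *m m2 = g + x *m q1.
  by apply: HGexact; rewrite mulmxDl -mulmxA Hq1 Hx2 addrN.
exists (row_mx (- x) y).
rewrite mul_row_block mulmx0 addr0 mulNmx mulmxN opprK Hx1 Hy mulNmx.
by rewrite addrCA addNr addr0.
Qed.

(* Exactness of the cone at F_2 (+) G_2: a cone cycle (x, y) satisfies
   x d_0' = x q_1 m_1 = - y m_2 m_1 = 0, so x is a cycle of F. *)
Lemma trim_exact_second {r3 c c3} {d3 : 'M[R]_(r3, r2)} {q2 : 'M[R]_(r3, c)}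
    {m2 : 'M[R]_(c, b)} {m3 : 'M[R]_(c3, c)} :
  exact_at d3 (row_mx d2' d0) -> m2 *m m1 = 0 ->
  q2 *m m2 = d3 *m q1 -> exact_at m3 m2 ->
  exact_at (block_mx (- d3) q2 0 m3) (block_mx (- d2') q1 0 m2).
Proof.
move=> [H32 HFexact] H12 Hq2 HG; apply: cone_exact => //.
  by move: H32; rewrite mul_mx_row -row_mx0 => /eq_row_mx [].
move=> x y Hx Hxy; apply: HFexact.
have Hx0 : x *m d0 = 0.
  have := congr1 (mulmx^~ m1) Hxy.
  by rewrite mulmxDl -!mulmxA Hq1 H12 mulmx0 addr0 mul0mx.
by rewrite mul_mx_row Hx Hx0 row_mx0.
Qed.

End Trimming.

Theorem theorem2p5 (k : fieldType) (n : nat)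
  (I : {mpoly k[n]} -> Prop) (HI : is_homog_ideal I)
  (* F_1 = F_1' (+) R e_0, rank F_1' = a; F_(i+2) of rank rF i *)
  (a : nat) (rF : nat -> nat)
  (d1' : 'M[{mpoly k[n]}]_(a, 1))          (* d_1 restricted to F_1' *)
  (f0 : {mpoly k[n]})                       (* d_1(e_0) *)
  (d2' : 'M[{mpoly k[n]}]_(rF 0%N, a))       (* d_2' : F_2 -> F_1' *)
  (d0 : 'M[{mpoly k[n]}]_(rF 0%N, 1))        (* d_0' : F_2 -> R *)
  (d : forall i, 'M[{mpoly k[n]}]_(rF i.+1, rF i))   (* d i = d_(i+3) *)
  (HF : homog_free_resolution I (col_mx d1' (f0%:M : 'M_1)) (row_mx d2' d0) d)
  (A : {mpoly k[n]} -> Prop) (HA : is_homog_ideal A)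
  (Hd0 : forall v : 'rV[{mpoly k[n]}]_(rF 0%N), A ((v *m d0) 0 0))
  (* resolution G of R/A: G_1 of rank b, G_(i+2) of rank rG i *)
  (b : nat) (rG : nat -> nat)
  (m1 : 'M[{mpoly k[n]}]_(b, 1)) (m2 : 'M[{mpoly k[n]}]_(rG 0%N, b))
  (m : forall i, 'M[{mpoly k[n]}]_(rG i.+1, rG i))   (* m i = m_(i+3) *)
  (HG : homog_free_resolution A m1 m2 m)
  (q1 : 'M[{mpoly k[n]}]_(rF 0%N, b))                   (* q_1 : F_2 -> G_1 *)
  (q : forall i, 'M[{mpoly k[n]}]_(rF i.+1, rG i))    (* q i = q_(i+2) : F_(i+3) -> G_(i+2) *)
  (Hq1 : q1 *m m1 = d0)
  (Hq2 : q 0%N *m m2 = d 0%N *m q1)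
  (Hq : forall i, q i.+1 *m m i = d i.+1 *m q i) :
  let beta := - (f0 *: m1) in
  (* the maps d_1|F_1', q_1, q_2, ... form a morphism of complexes T -> B *)
  [/\ d2' *m d1' = q1 *m beta, q 0%N *m m2 = d 0%N *m q1
    & forall i, q i.+1 *m m i = d i.+1 *m q i] /\
  (* its mapping cone is a free resolution of R/J, J = K' + A K_0 *)
  free_resolution
    (ideal_add (image_ideal d1') (ideal_mul A (principal_ideal f0)))
    (col_mx d1' beta)
    (block_mx (- d2') q1 0 m2)
    (fun i => block_mx (- d i) (q i) 0 (m i)).
Proof.
move=> beta; rewrite {}/beta.
case: HF => [[_ HF1 HF2 HFi] _].
case: HG => [[HAm1 HG1 HG2 HGi] _].
have [HAideal _] := HA.
split; first by split=> //; exact: trim_first_square Hq1 (proj1 HF1).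
split.
- exact: trim_image_ideal.
- exact (trim_exact_first Hq1 HF1 HG1).
- exact (trim_exact_second Hq1 HF2 (proj1 HG1) Hq2 HG2).
- by move=> i; apply: cone_exact_of_exact.
Qed.
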